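(* Let $G$ be a triangulation on $n$ vertices. Every independent set $I$ of vertices of $G$, each of degree at least six in $G$, satisfies $|I|\le (n-2)/3$.
   Context: Graphs are finite, undirected and simple. A triangulation is a planar graph embedded in the plane such that every face, including the outer face, is bounded by a cycle on three edges. A set of vertices is independent if no two of its vertices are adjacent. *)

From mathcomp Require Import all_boot.
From mathcomp Require Import fingroup perm.
Set Implicit Arguments. Unset Strict Implicit. Unset Printing Implicit Defensive.

Definition simple_graph (V : finType) (adj : rel V) : Prop :=
  symmetric adj /\ irreflexive adj.

Definition deg (V : finType) (adj : rel V) (v : V) : nat := #|[set w | adj v w]|.

Definition independent (V : finType) (adj : rel V) (I : {set V}) : Prop :=
  forall u v, u \in I -> v \in I -> ~~ adj u v.

(* Plane embedding as a combinatorial map (rotation system):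
   darts D, tail : D -> V, alpha = edge involution (reverses a dart),
   sigma = rotation of the darts around their tail vertex,
   faces = orbits of phi := sigma \o alpha (face traversal).
   The map is plane (genus 0) iff Euler's formula V - E + F = 2 holds. *)
Definition face_perm (D : finType) (alpha sigma : {perm D}) : D -> D :=
  fun d => sigma (alpha d).

Definition plane_map_of (V : finType) (adj : rel V)
    (D : finType) (tail : D -> V) (alpha sigma : {perm D}) : Prop :=
  (
      ((forall d, alpha (alpha d) = d) /\ (forall d, alpha d != d)) /\
      ((forall d, tail (sigma d) = tail d) /\
      (forall d d', tail d = tail d' -> fconnect sigma d d')) /\
      ((forall v, exists d, tail d = v) /\
      (forall u v, adj u v <-> exists d, tail d = u /\ tail (alpha d) = v)) /\
      (forall d d', tail d = tail d' -> tail (alpha d) = tail (alpha d') -> d = d') /\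
      (forall u v, connect adj u v) /\
      (#|V| + fcard (face_perm alpha sigma) predT = #|D|./2 + 2)%N).

Definition triangulation (V : finType) (adj : rel V) : Prop :=
  simple_graph adj /\
  exists (D : finType) (tail : D -> V) (alpha sigma : {perm D}),
    plane_map_of adj tail alpha sigma /\
    (forall d, fingraph.order (face_perm alpha sigma) d = 3%N).

From mathcomp Require Import all_boot.
From mathcomp Require Import fingroup perm.
From mathcomp Require Import zify.

(* A triangulation with n vertices has 2E = 3F darts, so Euler's
   formula n - E + F = 2 gives 6(n - 2) darts. A vertex of degree at least six
   is the tail of at least six darts, so at least 6|I| darts leave I. Consecutive
   darts along a face have adjacent tails, so by independence no face traversal
   step maps a dart leaving I to another one; as the face permutation has order
   three, the darts leaving I and their two successors along faces are three
   disjoint sets, whence 3 * 6|I| <= 6(n - 2). *)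

Set Implicit Arguments.
Unset Strict Implicit.
Unset Printing Implicit Defensive.

Lemma fcard_const_order (T : finType) (f : T -> T) (k : nat) :
  injective f -> (forall x, fingraph.order f x = k) -> k * fcard f predT = #|T|.
Proof.
move=> f_inj order_k; rewrite mulnC; apply: fcard_order_set => //.
by apply/subsetP => x _; rewrite inE order_k.
Qed.

Lemma order_involution (T : finType) (f : T -> T) (x : T) :
  f (f x) = x -> f x != x -> fingraph.order f x = 2.
Proof.
move=> ffx fx_neq_x; apply: (@order_cycle _ f [:: x; f x]) => /=.
- by rewrite ffx !eqxx.
- by rewrite inE eq_sym fx_neq_x.
- exact: mem_head.
Qed.

Lemma leq_card_period3 (T : finType) (f : T -> T) (S : {set T}) :
  (forall x, f (f (f x)) = x) -> (forall x, x \in S -> f x \notin S) ->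
  3 * #|S| <= #|T|.
Proof.
move=> f3 S_f; have f_inj : injective f := can_inj (g := f \o f) f3.
have S_S1 : [disjoint S & f @: S].
  rewrite disjoint_subset; apply/subsetP => x xS; rewrite inE.
  by apply/imsetP => -[y yS xE]; rewrite xE (negPf (S_f y yS)) in xS.
have S_S2 : [disjoint S & f @: (f @: S)].
  rewrite disjoint_subset; apply/subsetP => x xS; rewrite inE.
  apply/imsetP => -[_ /imsetP[y yS ->] xE].
  by have := S_f _ xS; rewrite xE f3 yS.
have S1_S2 : [disjoint f @: S & f @: (f @: S)] by rewrite imset_disjoint.
apply: leq_trans (max_card (mem (S :|: f @: S :|: f @: (f @: S)))).
rewrite !cardsU setIUl !disjoint_setI0 // setU0 !cards0 !subn0 !card_imset //.
lia.
Qed.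

Lemma deg_le_card_fiber (V D : finType) (adj : rel V) (tail head : D -> V)
    (v : V) :
  (forall w, adj v w -> exists2 d, tail d = v & head d = w) ->
  deg adj v <= #|[set d | tail d == v]|.
Proof.
move=> darts; apply: leq_trans (leq_imset_card head _).
apply/subset_leq_card/subsetP => w; rewrite inE => /darts[d dv <-].
by rewrite imset_f // inE dv.
Qed.

Lemma leq_card_preimset (T V : finType) (f : T -> V) (A : {set V}) (k : nat) :
  (forall v, v \in A -> k <= #|[set x | f x == v]|) -> k * #|A| <= #|f @^-1: A|.
Proof.
move=> fiber_k; rewrite -[X in _ <= X]sum1_card.
rewrite (partition_big f (mem A)) /=; last by move=> x; rewrite inE.
rewrite mulnC -sum_nat_const; apply: leq_sum => v vA.
apply: leq_trans (fiber_k v vA) _; rewrite -sum1_card; apply/eq_leq/eq_bigl => x.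
by rewrite !inE; case: eqP => [->|]; rewrite ?vA ?andbF.
Qed.

Section TriangulatedPlaneMap.

Variables (V : finType) (adj : rel V) (D : finType) (tail : D -> V).
Variables (alpha sigma : {perm D}).
Hypothesis plane_map : plane_map_of adj tail alpha sigma.
Hypothesis face_order3 : forall d, fingraph.order (face_perm alpha sigma) d = 3.

Lemma face_perm_inj : injective (face_perm alpha sigma).
Proof. by move=> d d' /perm_inj /perm_inj. Qed.

Lemma face_perm3 d :
  face_perm alpha sigma (face_perm alpha sigma (face_perm alpha sigma d)) = d.
Proof. by have := iter_order face_perm_inj d; rewrite face_order3. Qed.

Lemma adj_tail_face_perm d : adj (tail d) (tail (face_perm alpha sigma d)).
Proof.
have [_ [[tail_sigma _] [[_ tail_adj] _]]] := plane_map.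
by apply/tail_adj; exists d; rewrite /face_perm tail_sigma.
Qed.

Lemma deg_le_card_darts v : deg adj v <= #|[set d | tail d == v]|.
Proof.
have [_ [_ [[_ tail_adj] _]]] := plane_map.
apply: (deg_le_card_fiber (head := tail \o alpha)) => w /tail_adj[d [dv dw]].
by exists d.
Qed.

Lemma card_darts_triangulation : #|D| + 12 = 6 * #|V|.
Proof.
have [[alpha2 alpha_fix] [_ [_ [_ [_ euler]]]]] := plane_map.
have edges : 2 * fcard alpha predT = #|D|.
  by apply: fcard_const_order perm_inj _ => d; apply: order_involution.
have faces : 3 * fcard (face_perm alpha sigma) predT = #|D|.
  exact: fcard_const_order face_perm_inj face_order3.
lia.
Qed.

End TriangulatedPlaneMap.

Theorem mainTheorem2 (V : finType) (adj : rel V) (I : {set V}) :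
  triangulation adj ->
  independent adj I ->
  (forall v, v \in I -> 6 <= deg adj v) ->
  3 * #|I| <= #|V| - 2.
Proof.
move=> [_ [D [tail [alpha [sigma [plane_map face_order3]]]]]] indep_I deg_I.
have darts_I : 6 * #|I| <= #|tail @^-1: I|.
  apply: leq_card_preimset => v vI.
  exact: leq_trans (deg_I v vI) (deg_le_card_darts plane_map v).
have faces_I : 3 * #|tail @^-1: I| <= #|D|.
  apply: leq_card_period3 (face_perm3 face_order3) _ => d; rewrite !inE => dI.
  by apply/negP => /(indep_I _ _ dI); rewrite adj_tail_face_perm.
have := card_darts_triangulation plane_map face_order3.
lia.
Qed.
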